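(* For every $n\geq 3$, the cycle $C_n$ is a strong 2-cop-win graph and $\lim_{m\to\infty}\mathrm{capt}_2(C_n,m)=\lfloor (n-1)/2\rfloor$.
   Context: All graphs are finite, simple, connected and reflexive (a player may stay in place). The game of $k$ cops and $m$ robbers on $G$: in round 0 the cops first choose starting vertices, then the robbers choose theirs. In each round $i\geq 1$, all $k$ cops move (each to an adjacent vertex or staying), then all $m$ robbers move likewise. Several players may occupy the same vertex. Whenever a cop and some robbers occupy the same vertex, those robbers are captured and take no further part in the game. Both sides have full information. The cops win if all robbers are captured after finitely many rounds. $G$ is $k$-cop-win if $k$ cops can always win against one robber. For a $k$-cop-win graph $G$, $\mathrm{capt}_k(G,m)$ is the index of the round in which the last robber is captured when $k$ cops play to minimize this index and $m$ robbers play to maximize it. $G$ is strong $k$-cop-win if $\lim_{m\to\infty}\mathrm{capt}_k(G,m)$ exists (and is finite). *)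

From mathcomp Require Import all_boot.
Set Implicit Arguments. Unset Strict Implicit. Unset Printing Implicit Defensive.

(* A graph is given by a finite vertex type T and an adjacency relation e.
   Players may stay in place (reflexive moves). *)
Section Game.
Variables (T : finType) (e : rel T) (k m : nat).

Definition move (x y : T) : bool := (x == y) || e x y.

Notation cops := {ffun 'I_k -> T}.
(* positions of the m robbers; None = already captured *)
Notation robs := {ffun 'I_m -> option T}.

Definition capture (c : cops) (r : robs) : robs :=
  [ffun j => if r j is Some v then
               (if [exists i, c i == v] then None else Some v)
             else None].

Definition all_caught (r : robs) : bool := [forall j, r j == None].

Definition cop_step (c c' : cops) : bool := [forall i, move (c i) (c' i)].

Definition rob_step (r : robs) (r' : {ffun 'I_m -> T}) : bool :=
  [forall j, if r j is Some v then move v (r' j) else true].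

Definition relocate (r : robs) (r' : {ffun 'I_m -> T}) : robs :=
  [ffun j => if r j is Some _ then Some (r' j) else None].

(* cops_win t c r : from the position (c, r) reached at the end of a round,
   the cops can force that all robbers are captured within t further rounds.
   A round: the cops move (captures), then the robbers move (captures). *)
Fixpoint cops_win (t : nat) (c : cops) (r : robs) : bool :=
  match t with
  | 0 => all_caught r
  | t'.+1 =>
      all_caught r ||
      [exists c' : cops, cop_step c c' &&
         [forall r' : {ffun 'I_m -> T},
            rob_step (capture c' r) r' ==>
            cops_win t' c' (capture c' (relocate (capture c' r) r'))]]
  end.

(* capt_le t : k cops can guarantee that the last of m robbers is captured
   no later than round t (round 0 = cops place, then robbers place). *)
Definition capt_le (t : nat) : bool :=
  [exists c0 : cops, [forall r0 : {ffun 'I_m -> T},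
     cops_win t c0 (capture c0 [ffun j => Some (r0 j)])]].

Definition is_capt (t : nat) : Prop :=
  capt_le t /\ forall t', t' < t -> ~~ capt_le t'.

End Game.

Definition kcopwin (T : finType) (e : rel T) (k : nat) : Prop :=
  exists t, capt_le e k 1 t.

(* strong k-cop-win: lim_{m -> oo} capt_k(G,m) exists (and is finite);
   capt takes values in nat, so the limit exists iff the sequence is
   eventually constant. *)
Definition strong_kcopwin (T : finType) (e : rel T) (k : nat) : Prop :=
  kcopwin e k /\ exists L N, forall m, N <= m -> is_capt e k m L.

Definition capt_limit (T : finType) (e : rel T) (k L : nat) : Prop :=
  exists N, forall m, N <= m -> is_capt e k m L.

Definition cycle_adj (n : nat) : rel 'I_n :=
  fun i j => (val j == (val i).+1 %% n) || (val i == (val j).+1 %% n).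
Arguments cycle_adj : clear implicits.

(* Lower bound: with at least n robbers, one on every vertex, the robbers simply
   stand still; the two cops then clear at most two vertices at placement and two
   per round, so capture takes at least (n - 2) / 2 rounds, i.e. (n - 1) %/ 2.
   Upper bound: the cops start on the adjacent vertices 0 and 1 and walk apart,
   one clockwise and one counterclockwise.  A robber can never pass a cop, so all
   surviving robbers stay in the arc strictly between them, which shrinks by two
   vertices per round and is empty after (n - 1) / 2 rounds, however many
   robbers there are. *)

From mathcomp Require Import all_boot.
From mathcomp Require Import zify.
Set Implicit Arguments. Unset Strict Implicit. Unset Printing Implicit Defensive.

Section StationaryRobbers.
Variables (T : finType) (e : rel T) (k m : nat).
Implicit Types (c : {ffun 'I_k -> T}) (r : {ffun 'I_m -> option T}) (p : {ffun 'I_m -> T}).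

Definition alive r : {set T} :=
  [set w | [exists j, r j == Some w]].

Definition stationary p r :=
  forall j v, r j = Some v -> v = p j.

Lemma alive_capture c r :
  alive (capture c r) = alive r :\: [set c i | i in 'I_k].
Proof.
apply/setP => w; rewrite !inE; apply/existsP/andP.
- move=> [j]; rewrite ffunE; case E: (r j) => [v|] //.
  case: existsP => // no_cop /eqP [<-]; split; last by apply/existsP; exists j; rewrite E.
  by apply/imsetP => -[i _ cop_v]; apply: no_cop; exists i; rewrite cop_v.
- move=> [/imsetP no_cop /existsP [j /eqP rj]]; exists j; rewrite ffunE rj.
  by case: existsP => // -[i /eqP cop_w]; case: no_cop; exists i.
Qed.

Lemma card_alive_capture c r :
  #|alive r| <= #|alive (capture c r)| + k.
Proof.
have card_cops : #|[set c i | i in 'I_k]| <= k.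
  by rewrite (leq_trans (leq_imset_card _ _)) // card_ord.
have card_caught : #|alive r :&: [set c i | i in 'I_k]| <= k.
  by rewrite (leq_trans (subset_leq_card (subsetIr _ _))).
by rewrite alive_capture cardsD; lia.
Qed.

Lemma capture_Some c r j w :
  capture c r j = Some w -> r j = Some w /\ ~~ [exists i, c i == w].
Proof. by rewrite ffunE; case: (r j) => // v; case: ifP => // /negbT no_cop [<-]. Qed.

Lemma capture_idem c r : capture c (capture c r) = capture c r.
Proof.
by apply/ffunP => j; rewrite !ffunE; case: (r j) => //= v; case: ifP => //= ->.
Qed.

Lemma stationary_capture p c r :
  stationary p r -> stationary p (capture c r).
Proof. by move=> st j v; rewrite ffunE; case E: (r j) => [w|] //; case: ifP => // _ [<-]; apply: st E. Qed.

Lemma relocate_stationary p r : stationary p r -> relocate r p = r.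
Proof.
by move=> st; apply/ffunP => j; rewrite ffunE; case E: (r j) => [v|] //; rewrite (st _ _ E).
Qed.

Lemma rob_step_stationary p r : stationary p r -> rob_step e r p.
Proof. by move=> st; apply/forallP => j; case E: (r j) => [v|] //; rewrite (st _ _ E) /move eqxx. Qed.

Lemma alive_all_caught r : all_caught r -> alive r = set0.
Proof.
move/forallP=> caught; apply/setP => w; rewrite !inE.
by apply/existsP => -[j]; rewrite (eqP (caught j)).
Qed.

(* Robbers that stay put are only captured where a cop lands, so each round
   clears at most [k] occupied vertices. *)
Lemma card_alive_cops_win p t c r :
  stationary p r -> cops_win e t c r -> #|alive r| <= k * t.
Proof.
elim: t c r => [|t IH] c r st /=; first by move/alive_all_caught ->; rewrite cards0.
case/orP => [/alive_all_caught -> | /existsP [c' /andP [_ /forallP /(_ p)]]].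
  by rewrite cards0.
have st' := stationary_capture (c := c') st.
rewrite rob_step_stationary //= relocate_stationary // capture_idem => /(IH _ _ st').
by move: (card_alive_capture c' r); lia.
Qed.

Lemma capt_le_card t : #|T| <= m -> capt_le e k m t -> #|T| <= k * t.+1.
Proof.
move=> T_le_m /existsP [c0 /forallP win].
case: (posnP #|T|) => [-> // | /card_gt0P [x0 _]].
pose p : {ffun 'I_m -> T} := [ffun j : 'I_m => nth x0 (enum T) j].
have st : stationary p (capture c0 [ffun j => Some (p j)]).
  by apply: stationary_capture => j v; rewrite ffunE => -[].
have all_alive : alive [ffun j => Some (p j)] = [set: T].
  apply/setP => w; rewrite !inE; apply/existsP.
  have w_lt_m : index w (enum T) < m by rewrite (leq_trans _ T_le_m) // cardE index_mem mem_enum.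
  by exists (Ordinal w_lt_m); rewrite !ffunE /= nth_index ?mem_enum.
have := card_alive_cops_win st (win p); have := card_alive_capture c0 [ffun j => Some (p j)].
by rewrite all_alive cardsT; lia.
Qed.

End StationaryRobbers.

Section CycleSqueeze.
Variables (n : nat) (n_gt2 : 2 < n).
Let n_gt0 : 0 < n. Proof. exact: ltnW (ltnW n_gt2). Qed.

Definition cyc (i : nat) : 'I_n := Ordinal (ltn_pmod i n_gt0).

Lemma cycle_adj_next i : cycle_adj n (cyc i) (cyc i.+1).
Proof. by rewrite /cycle_adj /= -[(i %% n).+1]addn1 modnDml addn1 eqxx. Qed.

Lemma cycle_adj_prev i : cycle_adj n (cyc i.+1) (cyc i).
Proof. by rewrite /cycle_adj /= -[(i %% n).+1]addn1 modnDml addn1 eqxx orbT. Qed.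

Lemma cycle_move_interior (v w : 'I_n) :
  0 < v -> v.+1 < n -> move (cycle_adj n) v w -> v.-1 <= w <= v.+1.
Proof.
move=> v_gt0 v_lt; rewrite /move /cycle_adj (modn_small v_lt) -val_eqE /=.
case: (ltngtP w.+1 n) => [w_lt | | w_eq]; last 2 first.
- by move: (ltn_ord w); lia.
- by rewrite w_eq modnn; lia.
by rewrite (modn_small w_lt); lia.
Qed.

(* The two cops start at 0 and 1 and close in on the robbers from both sides:
   after [s] rounds they stand at [-s] and [s + 1]. *)
Definition squeeze (s : nat) : {ffun 'I_2 -> 'I_n} :=
  [ffun i => if val i == 0 then cyc (n - s) else cyc s.+1].

Lemma squeeze_mem s (w : 'I_n) :
  [exists i, squeeze s i == w] = (w == (n - s) %% n :> nat) || (w == s.+1 %% n :> nat).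
Proof.
apply/existsP/orP => [[i /eqP <-] | [] /eqP w_eq].
- by rewrite ffunE; case: ifP => _; [left | right].
- by exists ord0; rewrite ffunE -val_eqE /= w_eq.
- by exists (@Ordinal 2 1 isT); rewrite ffunE -val_eqE /= w_eq.
Qed.

Lemma squeeze_step s : s < n -> cop_step (cycle_adj n) (squeeze s) (squeeze s.+1).
Proof.
move=> s_lt; apply/forallP => i; rewrite /move !ffunE; case: ifP => _.
- by rewrite -[n - s](_ : (n - s.+1).+1 = n - s) ?cycle_adj_prev ?orbT //; lia.
- by rewrite cycle_adj_next orbT.
Qed.

Definition robbers_in m (a b : nat) (r : {ffun 'I_m -> option 'I_n}) :=
  forall j w, r j = Some w -> a <= w <= b.

Lemma squeeze_round m s (r : {ffun 'I_m -> option 'I_n}) (r' : {ffun 'I_m -> 'I_n}) :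
  s.+2 < n -> robbers_in s.+2 (n - s.+1) r ->
  rob_step (cycle_adj n) (capture (squeeze s.+1) r) r' ->
  robbers_in s.+3 (n - s.+2) (capture (squeeze s.+1) (relocate (capture (squeeze s.+1) r) r')).
Proof.
move=> s_lt r_in /forallP step j w /capture_Some [].
rewrite ffunE; case rj: (capture _ r j) => [v|] // [w_eq].
have [/r_in v_in] := capture_Some rj; move: (step j); rewrite rj w_eq.
rewrite !squeeze_mem (modn_small (_ : s.+2 < n)) // (modn_small (_ : n - s.+1 < n)); last lia.
move=> /cycle_move_interior w_near v_new w_new.
by have := w_near ltac:(lia) ltac:(lia); lia.
Qed.

Lemma robbers_in_all_caught m a b (r : {ffun 'I_m -> option 'I_n}) :
  b < a -> robbers_in a b r -> all_caught r.
Proof. by move=> ba r_in; apply/forallP => j; case E: (r j) => [w|] //; move: (r_in _ _ E); lia. Qed.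

Lemma cops_win_squeeze m u s (r : {ffun 'I_m -> option 'I_n}) :
  robbers_in s.+2 (n - s.+1) r -> n <= 2 * (s + u) + 2 ->
  cops_win (cycle_adj n) u (squeeze s) r.
Proof.
elim: u s r => [|u IH] s r r_in n_le /=; first by apply: robbers_in_all_caught r_in; lia.
case: (leqP n (2 * s + 2)) => [n_le' | n_gt].
  by rewrite (robbers_in_all_caught _ r_in) //; lia.
apply/orP; right; apply/existsP; exists (squeeze s.+1).
rewrite squeeze_step /=; last lia.
apply/forallP => r'; apply/implyP => step.
apply: IH; last lia.
by apply: (squeeze_round _ r_in step); lia.
Qed.

Lemma capt_le_cycle m : capt_le (cycle_adj n) 2 m ((n - 1) %/ 2).
Proof.
apply/existsP; exists (squeeze 0); apply/forallP => r0.
apply: cops_win_squeeze; last lia.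
move=> j w /capture_Some [/[swap]]; rewrite squeeze_mem subn0 modnn (modn_small (ltnW n_gt2)).
by move: (ltn_ord w); lia.
Qed.

End CycleSqueeze.

Theorem mainTheorem11 (n : nat) (hn : 3 <= n) :
  strong_kcopwin (cycle_adj n) 2 /\ capt_limit (cycle_adj n) 2 ((n - 1) %/ 2).
Proof.
have limit : capt_limit (cycle_adj n) 2 ((n - 1) %/ 2).
  exists n => m n_le_m; split; first exact: capt_le_cycle.
  move=> t t_lt; apply/negP => /(capt_le_card _); rewrite card_ord => /(_ n_le_m).
  by lia.
split=> //; split; last by exists ((n - 1) %/ 2).
by exists ((n - 1) %/ 2); apply: capt_le_cycle.
Qed.
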